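(* Let $T$ be a negative subset and $W$ a positive subset of $\mathbb{N}^2$. If a nonvanishing nonempty finite multiset $U$ on $\mathbb{N}^2$ is bounded by $T,W$, then $\mathrm{BRSK}(U)$ is bounded by $T,W$.
   Context: $\mathbb{N}$ = positive integers. For a finite multiset $U$ on $\mathbb{N}^2$, $U_{(1)}$ and $U_{(2)}$ are the multisets of first and second coordinates; $U$ is negative/positive/nonvanishing if each element $(a,b)$ has $a<b$ / $a>b$ / $a\neq b$; $U^-$, $U^+$ are the negative and positive sub-multisets; $\iota$ swaps coordinates. For equal-size finite multisets of $\mathbb{N}$, $A\le B$ iff the sorted entries satisfy $a_i\le b_i$; $A\lessdot B$ iff $A,B$ nonempty and $a_i<b_i$. For finite multisets with $|A|+|D|=|B|+|C|$, ''$A-C\le B-D$'' means $A\sqcup D\le B\sqcup C$. For multisets $U,V$ on $\mathbb{N}^2$, $U\le V$ means $U_{(1)}-U_{(2)}\le V_{(1)}-V_{(2)}$. A chain is a subset $\{(e_1,f_1),\dots,(e_m,f_m)\}$ of $\mathbb{N}^2$ with $e_1<\dots<e_m$ and $f_1>\dots>f_m$. A nonempty multiset $U$ on $\mathbb{N}^2$ is bounded by $T,W$ if $T\le C\le W$ for every chain $C$ contained in the underlying set of $U$. A semistandard notched bitableau $(P,Q)$ with rows $P_1,\dots,P_r$, $Q_1,\dots,Q_r$ is bounded by $T,W$ if $T_{(1)}-T_{(2)}\le P_1-Q_1$ and $P_r-Q_r\le W_{(1)}-W_{(2)}$. Notched tableau: finite sequence of left-justified, possibly empty rows of positive integers; row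 strict if rows strictly increase (rows identified with entry sets). Notched bitableau: two notched tableaux of the same shape. $(P,Q)$ semistandard: row strict and $P_1-Q_1\le\dots\le P_r-Q_r$. $\iota(P,Q)$ = rows of $(Q,P)$ in reversed order. BRSK: a row-strict $P$ is semistandard on $b$ if $P^{<b}$ (entries $\ge b$ deleted) has weakly decreasing row lengths and weakly increasing columns; $P\xleftarrow{b}a$ ($a<b$): remove entries $\ge b$, row-insert $a$ (append at the end of a row if larger than all its entries and stop; else replace the smallest entry $\ge a$ and insert the replaced entry into the next row; a row below the last is empty; the last added box is the new box), then restore the removed entries at the right ends of their rows. For negative $U=\{(a_1,b_1),\dots,(a_t,b_t)\}$ listed with $b_1\ge\dots\ge b_t$ and $a_i\ge a_{i+1}$ when $b_i=b_{i+1}$: from the empty pair, $P^{(i+1)}=P^{(i)}\xleftarrow{b_{i+1}}a_{i+1}$, and $b_{i+1}$ is placed at the left end of row $j$ of $Q^{(i)}$, $j$ the row of the new box; $\mathrm{BRSK}(U)=(P^{(t)},Q^{(t)})$. For positive $U$, $\mathrm{BRSK}(U)=\iota(\mathrm{BRSK}(\iota U))$; for nonvanishing $U$, $\mathrm{BRSK}(U)$ has the rows of $\mathrm{BRSK}(U^-)$ followed by the rows of $\mathrm{BRSK}(U^+)$. *)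

(* Multisets are represented by sequences (order irrelevant);
   N = positive integers is enforced by explicit positivity hypotheses. *)
From mathcomp Require Import all_boot.
Set Implicit Arguments. Unset Strict Implicit. Unset Printing Implicit Defensive.

(* A <= B for equal-size finite multisets: sorted entries a_i <= b_i
   (all2 also forces size A = size B). *)
Definition mle (A B : seq nat) : bool :=
  all2 leq (sort leq A) (sort leq B).

(* "A - C <= B - D" means A ⊔ D <= B ⊔ C. *)
Definition mdiff_le (A C B D : seq nat) : bool := mle (A ++ D) (B ++ C).

Definition fstm (U : seq (nat * nat)) : seq nat := map fst U.
Definition sndm (U : seq (nat * nat)) : seq nat := map snd U.

Definition pos_entries (U : seq (nat * nat)) : bool :=
  all (fun p => (0 < p.1) && (0 < p.2)) U.

Definition negative (U : seq (nat * nat)) : bool := all (fun p => p.1 < p.2) U.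
Definition positive (U : seq (nat * nat)) : bool := all (fun p => p.2 < p.1) U.
Definition nonvanishing (U : seq (nat * nat)) : bool := all (fun p => p.1 != p.2) U.

Definition neg_part (U : seq (nat * nat)) := filter (fun p => p.1 < p.2) U.
Definition pos_part (U : seq (nat * nat)) := filter (fun p => p.2 < p.1) U.

Definition swap_pt (p : nat * nat) : nat * nat := (p.2, p.1).
Definition iota_ms (U : seq (nat * nat)) := map swap_pt U.

Definition mle2 (U V : seq (nat * nat)) : bool :=
  mdiff_le (fstm U) (sndm U) (fstm V) (sndm V).

(* A chain, listed as (e_1,f_1),...,(e_m,f_m) with e increasing, f decreasing
   (this listing determines the set uniquely). *)
Definition chain_rel (x y : nat * nat) : bool := (x.1 < y.1) && (y.2 < x.2).
Definition is_chain (C : seq (nat * nat)) : bool := sorted chain_rel C.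

Definition bounded_ms (T W U : seq (nat * nat)) : Prop :=
  forall C : seq (nat * nat), is_chain C -> {subset C <= U} ->
    mle2 T C /\ mle2 C W.

Definition tableau := seq (seq nat).
Definition bitableau := (tableau * tableau)%type.

Definition bounded_bt (T W : seq (nat * nat)) (PQ : bitableau) : Prop :=
  mdiff_le (fstm T) (sndm T) (head [::] PQ.1) (head [::] PQ.2) /\
  mdiff_le (last [::] PQ.1) (last [::] PQ.2) (fstm W) (sndm W).

Definition iota_bt (PQ : bitableau) : bitableau := (rev PQ.2, rev PQ.1).

(* Row insertion of a into a tableau: returns the new tableau and the
   (0-based) row index of the new box. *)
Fixpoint row_ins (a : nat) (P : tableau) : tableau * nat :=
  match P with
  | [::] => ([:: [:: a]], 0)
  | r :: P' =>
      if all (fun x => x < a) r then (rcons r a :: P', 0)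
      else
        let k := find (fun x => a <= x) r in
        let y := nth 0 r k in
        let r' := set_nth 0 r k a in
        let (P'', j) := row_ins y P' in (r' :: P'', j.+1)
  end.

Definition ins_b (b a : nat) (P : tableau) : tableau * nat :=
  let lo := map (filter (fun x => x < b)) P in
  let hi := map (filter (fun x => b <= x)) P in
  let (L, j) := row_ins a lo in
  ([seq nth [::] L i ++ nth [::] hi i | i <- iota 0 (size L)], j).

Definition brsk_order (x y : nat * nat) : bool :=
  (y.2 < x.2) || ((x.2 == y.2) && (y.1 <= x.1)).

Definition brsk_step (PQ : bitableau) (p : nat * nat) : bitableau :=
  let (a, b) := p in
  let (P', j) := ins_b b a PQ.1 in
  (P', set_nth [::] PQ.2 j (b :: nth [::] PQ.2 j)).

Definition brsk_neg (U : seq (nat * nat)) : bitableau :=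
  foldl brsk_step ([::], [::]) (sort brsk_order U).

Definition brsk_pos (U : seq (nat * nat)) : bitableau :=
  iota_bt (brsk_neg (iota_ms U)).

Definition brsk (U : seq (nat * nat)) : bitableau :=
  let PQm := brsk_neg (neg_part U) in
  let PQp := brsk_pos (pos_part U) in
  (PQm.1 ++ PQp.1, PQm.2 ++ PQp.2).

(* Both inequalities are tested threshold by threshold: for multisets of equal size,
   A <= B iff for every k, A has at most as many entries >= k as B.

   Fix k.  The pairs of a negative multiset are inserted with b decreasing, so first
   come the pairs with b >= k and then those with b < k.  During the first phase every
   entry of Q is >= k, so #{Q_1 >= k} = |P_1| = #{P_1 >= k} + #{P_1 < k}, and the
   entries < k of P_1 form the first row of an ordinary Schensted insertion of the
   entries a < k; as in Schensted's theorem, its i-th entry ends a chain of length i+1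
   in U whose points all satisfy a < k <= b.  During the second phase no row of P or Q
   changes its number of entries >= k.  Hence #{Q_1 >= k} <= #{P_1 >= k} + |C| for a
   chain C of U with C_(1) < k <= C_(2), and T <= C supplies #{T_(1) >= k} + |C| <=
   #{T_(2) >= k}: this is the bound on the first row.  For the last row, which comes
   from BRSK(U^+), the same argument runs through the symmetry iota, with C <= W.
   When U^- or U^+ is empty the relevant row is produced by the other half; there it
   suffices that P_i <= Q_i for every row (since a < b for every pair), together with
   T negative and W positive. *)

From mathcomp Require Import all_boot zify.
Set Implicit Arguments. Unset Strict Implicit. Unset Printing Implicit Defensive.

Notation count_ge k := (count (fun x => k <= x)).

Lemma count_lt_ge k s : count (fun x => x < k) s + count_ge k s = size s.
Proof. by elim: s => //= x s <-; case: ltnP => /=; lia. Qed.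

Lemma count_ge_all k s : all (fun x => k <= x) s -> count_ge k s = size s.
Proof. by rewrite all_count => /eqP. Qed.

Lemma count_ge_all_lt k s : all (fun x => x < k) s -> count_ge k s = 0.
Proof. by rewrite all_count => /eqP lt_s; have := count_lt_ge k s; rewrite lt_s; lia. Qed.

Lemma filter_lt_all_ge k s : all (fun x => k <= x) s -> filter (fun x => x < k) s = [::].
Proof. by elim: s => //= x s IHs /andP[le_kx /IHs ->]; rewrite ltnNge le_kx. Qed.

Lemma all2_leq_count_ge s t k : all2 leq s t -> count_ge k s <= count_ge k t.
Proof.
elim: s t => [|x s IHs] [|y t] //= /andP[le_xy /IHs]; move: (count _ s) (count _ t).
by case: (leqP k x) => /=; case: (leqP k y) => /=; lia.
Qed.

Lemma all2_leq_map (T : eqType) (f g : T -> nat) (X : seq T) :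
  (forall x, x \in X -> f x <= g x) -> all2 leq (map f X) (map g X).
Proof.
elim: X => //= x X IHX le_fg; rewrite le_fg ?mem_head //=.
by apply: IHX => y yX; apply: le_fg; rewrite inE yX orbT.
Qed.

Lemma sorted_all2_leq s t : sorted leq s -> sorted leq t -> size s = size t ->
  (forall k, count_ge k s <= count_ge k t) -> all2 leq s t.
Proof.
elim: s t => [|x s IHs] [|y t] //= sorted_s sorted_t [size_st] le_count.
have x_le_s : all (leq x) s by apply: order_path_min sorted_s; apply: leq_trans.
have y_le_t : all (leq y) t by apply: order_path_min sorted_t; apply: leq_trans.
have le_xy : x <= y.
  have := le_count x; rewrite /= leqnn count_ge_all //.
  have := count_size (fun z => x <= z) t; rewrite -size_st; case: leqP => //=; lia.
rewrite le_xy; apply: (IHs _ (path_sorted sorted_s) (path_sorted sorted_t) size_st) => k.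
have := le_count k => /=; case: (leqP k x) => [le_kx|lt_xk].
  have le_ky := leq_trans le_kx le_xy; rewrite le_ky (@count_ge_all k s) //.
  by apply: sub_all x_le_s => z /= /(leq_trans le_kx).
case: (leqP k y) => [le_ky _|_] //=.
apply: leq_trans (count_size _ _) _; rewrite size_st count_ge_all //.
by apply: sub_all y_le_t => z /= /(leq_trans le_ky).
Qed.

Lemma mleP A B :
  reflect (size A = size B /\ forall k, count_ge k A <= count_ge k B) (mle A B).
Proof.
apply: (iffP idP) => [le_AB|[size_AB le_count]].
  split=> [|k]; last by have := all2_leq_count_ge k le_AB; rewrite !count_sort.
  by move: le_AB; rewrite /mle all2E !size_sort => /andP[/eqP].
apply: sorted_all2_leq => [|||k]; rewrite ?size_sort ?count_sort //.
all: exact: (sort_sorted leq_total _).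
Qed.

Lemma mle_perm A A' B B' : perm_eq A A' -> perm_eq B B' -> mle A B = mle A' B'.
Proof.
have sortE := perm_sortP leq_total leq_trans anti_leq.
by move=> /sortE eqA /sortE eqB; rewrite /mle eqA eqB.
Qed.

Lemma mle_cat A B C D : mle A B -> mle C D -> mle (A ++ C) (B ++ D).
Proof.
move=> /mleP[size_AB le_AB] /mleP[size_CD le_CD]; apply/mleP.
by split=> [|k]; rewrite ?size_cat ?count_cat ?size_AB ?size_CD ?leq_add.
Qed.

Lemma mle_map (T : eqType) (f g : T -> nat) (X : seq T) :
  (forall x, x \in X -> f x <= g x) -> mle (map f X) (map g X).
Proof.
move=> le_fg; apply/mleP; split=> [|k]; first by rewrite !size_map.
exact/all2_leq_count_ge/all2_leq_map.
Qed.

Lemma mdiff_le_of_mle A C B D : mle A C -> mle D B -> mdiff_le A C B D.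
Proof.
move=> le_AC le_DB.
by rewrite /mdiff_le (mle_perm (perm_refl _) (permEl (perm_catC B C))) mle_cat.
Qed.

Lemma all_set_nth (T : Type) (q : pred T) (x0 : T) s n y :
  all q s -> q y -> n <= size s -> all q (set_nth x0 s n y).
Proof.
elim: s n => [|x s IHs] [|n] //=; first by move=> _ ->.
  by case/andP=> _ -> ->.
by case/andP=> -> qs qy /(IHs _ qs qy).
Qed.

Lemma nth_map_filter (T : Type) (q : pred T) (P : seq (seq T)) i :
  nth [::] (map (filter q) P) i = filter q (nth [::] P i).
Proof. by elim: P i => [|r P IHP] [|i] //=; rewrite nth_nil. Qed.

Definition bump_pos a (r : seq nat) := find (fun x => a <= x) r.
Definition bump a (r : seq nat) := set_nth 0 r (bump_pos a r) a.

Lemma bump_pos_lt a r : ~~ all (fun x => x < a) r -> bump_pos a r < size r.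
Proof. by rewrite -has_find -has_predC; apply: sub_has => x /=; rewrite -leqNgt. Qed.

Lemma size_row_ins a P :
  size (row_ins a P).1 = maxn (size P) (row_ins a P).2.+1 /\ (row_ins a P).2 <= size P.
Proof.
elim: P a => [|r P IHP] a //=; case: ifP => _ /=; first by split=> //; lia.
case E: (row_ins _ P) => [L j] /=; have := IHP (nth 0 r (bump_pos a r)).
by rewrite E /= => -[-> le_j]; split; lia.
Qed.

Lemma size_nth_row_ins a P i :
  size (nth [::] (row_ins a P).1 i) = size (nth [::] P i) + (i == (row_ins a P).2).
Proof.
elim: P a i => [|r P IHP] a i /=; first by case: i => [|[|i]] //=; rewrite nth_nil.
case: ifP => all_lt /=.
  by case: i => [|i] /=; rewrite ?size_rcons ?addn1 ?addn0.
case E: (row_ins _ P) => [L j] /=; case: i => [|i] /=.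
  by rewrite size_set_nth addn0; apply/maxn_idPr/bump_pos_lt/negbT.
by have := IHP (nth 0 r (bump_pos a r)) i; rewrite E /= eqSS.
Qed.

Lemma row_ins_all (q : pred nat) a P : q a -> (forall i, all q (nth [::] P i)) ->
  forall i, all q (nth [::] (row_ins a P).1 i).
Proof.
elim: P a => [|r P IHP] a qa qP i /=; first by case: i => [|[|i]] //=; rewrite ?qa // nth_nil.
have qP' i' : all q (nth [::] P i') by exact: (qP i'.+1).
case: ifP => all_lt /=.
  by case: i => [|i] /=; [rewrite all_rcons qa (qP 0) | exact: qP'].
have lt_pos := bump_pos_lt (negbT all_lt).
case E: (row_ins _ P) => [L j] /=; case: i => [|i] /=.
  exact: all_set_nth (qP 0) qa (ltnW lt_pos).
have := IHP (nth 0 r (bump_pos a r)) _ qP' i; rewrite E; apply.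
exact: allP (qP 0) _ (mem_nth 0 lt_pos).
Qed.

Lemma nth_row_ins0 a P : nth [::] (row_ins a P).1 0 = bump a (nth [::] P 0).
Proof.
case: P => [|r P] //=; case: ifP => all_lt /=; last by case: (row_ins _ P).
rewrite /bump; suff -> : bump_pos a r = size r by rewrite set_nthE ltnn subnn cats1.
by apply: hasNfind; rewrite -all_predC; apply: sub_all all_lt => x /=; rewrite -ltnNge.
Qed.

Definition ins_low b a (P : tableau) := row_ins a (map (filter (fun x => x < b)) P).

Lemma ins_b_row b a P : (ins_b b a P).2 = (ins_low b a P).2.
Proof. by rewrite /ins_b /ins_low; case: (row_ins _ _). Qed.

Lemma size_ins_b b a P : size (ins_b b a P).1 = size (ins_low b a P).1.
Proof.
by rewrite /ins_b /ins_low; case: (row_ins _ _) => L j /=; rewrite size_map size_iota.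
Qed.

Lemma nth_ins_b b a P i : nth [::] (ins_b b a P).1 i =
  nth [::] (ins_low b a P).1 i ++ filter (fun x => b <= x) (nth [::] P i).
Proof.
rewrite /ins_b /ins_low; have [+ _] := size_row_ins a (map (filter (fun x => x < b)) P).
case: (row_ins _ _) => L j /=; rewrite size_map => size_L.
case: (ltnP i (size L)) => lt_i.
  by rewrite (nth_map 0) ?size_iota // nth_iota // add0n nth_map_filter.
rewrite !nth_default ?size_map ?size_iota //; lia.
Qed.

Lemma ins_low_lt b a P i : a < b -> all (fun x => x < b) (nth [::] (ins_low b a P).1 i).
Proof.
move=> lt_ab; apply: row_ins_all => // i'; rewrite nth_map_filter.
by apply/allP => x; rewrite mem_filter => /andP[].
Qed.

Lemma ins_b_head_row b a P : nth [::] (ins_b b a P).1 0 =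
  bump a (filter (fun x => x < b) (nth [::] P 0)) ++ filter (fun x => b <= x) (nth [::] P 0).
Proof. by rewrite nth_ins_b /ins_low nth_row_ins0 nth_map_filter. Qed.

Lemma pairwise_bump a s : pairwise leq s -> pairwise leq (bump a s).
Proof.
rewrite /bump /bump_pos; elim: s => [|x s IHs] //= /andP[x_le_s pw_s].
case: (leqP a x) => [le_ax|lt_xa] /=.
  by rewrite pw_s andbT; apply: sub_all x_le_s => z /= /(leq_trans le_ax).
rewrite IHs // andbT; apply: all_set_nth => //; [exact: ltnW | exact: find_size].
Qed.

Lemma filter_lt_bump_ge k a s :
  k <= a -> filter (fun x => x < k) (bump a s) = filter (fun x => x < k) s.
Proof.
rewrite /bump /bump_pos => le_ka; elim: s => [|x s IHs] /=; first by rewrite ltnNge le_ka.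
case: (leqP a x) => [le_ax|_] /=; last by rewrite IHs.
by rewrite !ltnNge le_ka (leq_trans le_ka le_ax).
Qed.

Lemma filter_lt_bump k a s : pairwise leq s -> a < k ->
  [/\ filter (fun x => x < k) (bump a s) =
        set_nth 0 (filter (fun x => x < k) s) (bump_pos a s) a,
      bump_pos a s <= size (filter (fun x => x < k) s)
    & forall i, i < bump_pos a s -> nth 0 (filter (fun x => x < k) s) i < a].
Proof.
rewrite /bump /bump_pos => + lt_ak; elim: s => [|x s IHs] /=; first by rewrite lt_ak.
case/andP=> x_le_s /IHs[eq_f le_pos lt_nth]; case: (leqP a x) => [le_ax|lt_xa] /=.
  rewrite lt_ak; split=> //; case: (ltnP x k) => //= le_kx.
  by rewrite filter_lt_all_ge //; apply: sub_all x_le_s => z /= /(leq_trans le_kx).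
by rewrite (ltn_trans lt_xa lt_ak) /= eq_f; split=> // -[|i] //= /lt_nth.
Qed.

Lemma subset_rcons (T : eqType) (s : seq T) x : {subset s <= rcons s x}.
Proof. by move=> y; rewrite mem_rcons inE orbC => ->. Qed.

Definition straddling_chain k (S C : seq (nat * nat)) :=
  [&& is_chain C, all (fun p => (p.1 < k) && (k <= p.2)) C & all (fun p => p \in S) C].

Lemma straddling_chain_sub k S S' C :
  {subset S <= S'} -> straddling_chain k S C -> straddling_chain k S' C.
Proof.
move=> sub_S /and3P[chain_C straddle /allP in_S]; rewrite /straddling_chain chain_C straddle.
by apply/allP => p /in_S /sub_S.
Qed.

Lemma count_ge_straddling_chain k S C : straddling_chain k S C ->
  count_ge k (fstm C) = 0 /\ count_ge k (sndm C) = size C.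
Proof.
case/and3P=> _ /allP straddle _; split.
  by apply: count_ge_all_lt; apply/allP => _ /mapP[p /straddle /andP[lt_p _] ->].
by rewrite count_ge_all ?size_map //; apply/allP => _ /mapP[p /straddle /andP[_ le_p] ->].
Qed.

Lemma straddling_chain_rcons k S c C a b :
  straddling_chain k S (c :: C) -> all (fun x => brsk_order x (a, b)) S ->
  (last c C).1 < a -> a < k -> k <= b ->
  straddling_chain k (rcons S (a, b)) (rcons (c :: C) (a, b)).
Proof.
case/and3P=> chain_cC straddle in_S ord lt_last lt_ak le_kb.
apply/and3P; split.
- move: chain_cC; rewrite /is_chain rcons_cons /= rcons_path => -> /=.
  rewrite /chain_rel lt_last /=.
  have /(allP ord) := allP in_S _ (mem_last c C); rewrite /brsk_order /=.
  by case/orP=> // /andP[_]; rewrite leqNgt lt_last.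
- by rewrite all_rcons /= lt_ak le_kb.
- by rewrite all_rcons mem_rcons mem_head; apply/allP => p /(allP in_S) /subset_rcons.
Qed.

Definition chain_witnesses k S (r : seq nat) := forall i, i < size r ->
  exists C, [/\ straddling_chain k S C, size C = i.+1 & (last (0, 0) C).1 <= nth 0 r i].

Lemma chain_witnesses_sub k S S' r :
  {subset S <= S'} -> chain_witnesses k S r -> chain_witnesses k S' r.
Proof.
move=> sub_S wit i /wit[C [stC szC lastC]].
by exists C; split=> //; apply: straddling_chain_sub stC.
Qed.

Lemma chain_witnesses_set_nth k S r a b n :
  chain_witnesses k S r -> a < k -> k <= b -> all (fun x => brsk_order x (a, b)) S ->
  n <= size r -> (forall i, i < n -> nth 0 r i < a) ->
  chain_witnesses k (rcons S (a, b)) (set_nth 0 r n a).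
Proof.
move=> wit lt_ak le_kb ord le_n lt_r i; rewrite size_set_nth nth_set_nth /= => lt_i.
case: eqP => [->|ne_in]; last first.
  have [|C [stC szC lastC]] := wit i; first by move: lt_i ne_in; lia.
  by exists C; split=> //; apply: straddling_chain_sub (@subset_rcons _ S (a, b)) stC.
case: n le_n lt_r {lt_i} => [|n] le_n lt_r.
  exists [:: (a, b)]; split=> //.
  by rewrite /straddling_chain /= lt_ak le_kb mem_rcons mem_head.
have [[|c C] [stC szC lastC]] := wit n le_n; first by [].
exists (rcons (c :: C) (a, b)); rewrite size_rcons szC last_rcons; split=> //.
by apply: straddling_chain_rcons => //; apply: leq_ltn_trans lastC (lt_r n _).
Qed.

Definition brsk_shape (PQ : bitableau) :=
  size PQ.1 = size PQ.2 /\ forall i, size (nth [::] PQ.1 i) = size (nth [::] PQ.2 i).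

Definition high_phase_inv k S (PQ : bitableau) :=
  [/\ forall i, all (fun x => k <= x) (nth [::] PQ.2 i),
      pairwise leq (nth [::] PQ.1 0)
    & chain_witnesses k S (filter (fun x => x < k) (nth [::] PQ.1 0))].

Definition brsk_inv k S (PQ : bitableau) :=
  [/\ brsk_shape PQ,
      forall i, count_ge k (nth [::] PQ.1 i) <= count_ge k (nth [::] PQ.2 i),
      exists2 C, straddling_chain k S C &
        count_ge k (nth [::] PQ.2 0) <= count_ge k (nth [::] PQ.1 0) + size C
    & all (fun p => k <= p.2) S -> high_phase_inv k S PQ].

Lemma brsk_stepE P Q a b : brsk_step (P, Q) (a, b) =
  ((ins_b b a P).1, set_nth [::] Q (ins_b b a P).2 (b :: nth [::] Q (ins_b b a P).2)).
Proof. by rewrite /brsk_step; case: (ins_b b a P). Qed.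

Lemma brsk_step_shape PQ p : brsk_shape PQ -> brsk_shape (brsk_step PQ p).
Proof.
case: PQ p => P Q [a b]; rewrite brsk_stepE => -[/= size_PQ size_rows].
have [size_L le_j] := size_row_ins a (map (filter (fun x => x < b)) P).
split=> [|i] /=.
  by rewrite size_ins_b size_L size_set_nth ins_b_row maxnC size_map size_PQ.
rewrite nth_ins_b size_cat size_nth_row_ins nth_map_filter nth_set_nth /= -ins_b_row.
rewrite !size_filter; have := count_lt_ge b (nth [::] P i); have := size_rows i.
by case: eqP => [<-|_] /=; lia.
Qed.

Lemma count_ge_brsk_step_low k P Q a b i : a < b -> b < k ->
  count_ge k (nth [::] (brsk_step (P, Q) (a, b)).1 i) = count_ge k (nth [::] P i) /\
  count_ge k (nth [::] (brsk_step (P, Q) (a, b)).2 i) = count_ge k (nth [::] Q i).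
Proof.
move=> lt_ab lt_bk; rewrite brsk_stepE /= nth_ins_b nth_set_nth /= count_cat.
rewrite count_ge_all_lt; last first.
  by apply: sub_all (ins_low_lt P i lt_ab) => x /= /ltn_trans; apply.
split; last by case: eqP => [<-|//] /=; rewrite leqNgt lt_bk.
rewrite add0n count_filter; apply: eq_count => x /=.
by case: (leqP k x) => //= le_kx; exact: ltnW (leq_trans lt_bk le_kx).
Qed.

Lemma high_phase_inv_step k S P Q a b :
  a < b -> k <= b -> all (fun x => brsk_order x (a, b)) S -> high_phase_inv k S (P, Q) ->
  high_phase_inv k (rcons S (a, b)) (brsk_step (P, Q) (a, b)).
Proof.
rewrite brsk_stepE => lt_ab le_kb ord [/= Q_ge pw_P0 wit].
rewrite /high_phase_inv /= ins_b_head_row.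
set lo := filter (fun x => x < b) (nth [::] P 0).
set hi := filter (fun x => b <= x) (nth [::] P 0).
have pw_lo : pairwise leq lo by apply: pairwise_filter.
have lo_lt : all (fun x => x < b) (bump a lo).
  apply: all_set_nth => //; last exact: find_size.
  by apply/allP => x; rewrite mem_filter => /andP[].
split=> [i||].
- by rewrite nth_set_nth /=; case: eqP => _ //=; rewrite le_kb Q_ge.
- rewrite pairwise_cat (pairwise_bump a pw_lo) (pairwise_filter _ pw_P0) !andbT.
  apply/allrelP => x y /(allP lo_lt) lt_xb; rewrite mem_filter => /andP[le_by _].
  exact: ltnW (leq_trans lt_xb le_by).
have hi_lt : filter (fun x => x < k) hi = [::].
  by apply: filter_lt_all_ge; apply/allP => x; rewrite mem_filter => /andP[/(leq_trans le_kb)].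
have lo_lt_k : filter (fun x => x < k) lo = filter (fun x => x < k) (nth [::] P 0).
  rewrite -filter_predI; apply: eq_filter => x /=.
  by case: (ltnP x k) => //= /leq_trans; apply.
rewrite filter_cat hi_lt cats0.
case: (ltnP a k) => [lt_ak|le_ka]; last first.
  rewrite filter_lt_bump_ge // lo_lt_k.
  exact: chain_witnesses_sub (@subset_rcons _ S (a, b)) wit.
have [-> le_pos lt_nth] := filter_lt_bump pw_lo lt_ak; rewrite lo_lt_k in le_pos lt_nth *.
exact: chain_witnesses_set_nth.
Qed.

Lemma first_row_bound_of_high k S PQ : brsk_shape PQ -> high_phase_inv k S PQ ->
  exists2 C, straddling_chain k S C &
    count_ge k (nth [::] PQ.2 0) <= count_ge k (nth [::] PQ.1 0) + size C.
Proof.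
move=> [_ size_rows] [Q_ge _ wit]; rewrite (count_ge_all (Q_ge 0)) -size_rows.
rewrite -(count_lt_ge k) -size_filter addnC.
case E: (size _) wit => [|n] wit; first by exists [::].
by have [|C [stC size_C _]] := wit n; [rewrite E | exists C => //; rewrite size_C].
Qed.

Lemma brsk_inv_step k S P Q a b : a < b -> all (fun x => brsk_order x (a, b)) S ->
  brsk_inv k S (P, Q) -> brsk_inv k (rcons S (a, b)) (brsk_step (P, Q) (a, b)).
Proof.
move=> lt_ab ord [shape le_rows [C stC le_C] high].
have shape' := brsk_step_shape (a, b) shape.
have [le_kb|lt_bk] := leqP k b.
  have S_ge : all (fun p => k <= p.2) S.
    apply: sub_all ord => -[x1 x2]; rewrite /brsk_order /=.
    by case/orP=> [/ltnW|/andP[/eqP -> _]] //; apply: leq_trans le_kb.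
  have high' := high_phase_inv_step lt_ab le_kb ord (high S_ge).
  have [Q_ge _ _] := high'; split=> // [i|]; last exact: first_row_bound_of_high.
  by rewrite (count_ge_all (Q_ge i)) -shape'.2 count_size.
have count_eq := count_ge_brsk_step_low P Q _ lt_ab lt_bk.
split=> // [i||].
- by have [-> ->] := count_eq i.
- exists C; last by have [-> ->] := count_eq 0.
  exact: straddling_chain_sub (@subset_rcons _ S (a, b)) stC.
- by rewrite all_rcons /= leqNgt lt_bk.
Qed.

Lemma brsk_order_total : total brsk_order.
Proof.
move=> [x1 x2] [y1 y2]; rewrite /brsk_order /=.
by case: ltngtP => //= _; case: leqP => //= /ltnW ->.
Qed.

Lemma brsk_order_trans : transitive brsk_order.
Proof.
move=> [y1 y2] [x1 x2] [z1 z2]; rewrite /brsk_order /=.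
by case/orP=> [?|/andP[/eqP ? ?]]; case/orP=> [?|/andP[/eqP ? ?]]; lia.
Qed.

Lemma brsk_inv_foldl k s : pairwise brsk_order s -> negative s ->
  brsk_inv k s (foldl brsk_step ([::], [::]) s).
Proof.
elim/last_ind: s => [_ _|s [a b] IHs].
  split; first by split=> // i; rewrite !nth_nil.
  - by move=> i; rewrite !nth_nil.
  - by exists [::].
  - by split=> // i; rewrite nth_nil.
rewrite pairwise_rcons /negative all_rcons foldl_rcons => /andP[ord pw_s] /andP[lt_ab neg_s].
case E: (foldl _ _ s) => [P Q]; apply: brsk_inv_step => //; rewrite -E.
exact: IHs.
Qed.

Lemma brsk_neg_inv k V : negative V -> brsk_inv k (sort brsk_order V) (brsk_neg V).
Proof.
move=> neg_V; apply: brsk_inv_foldl.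
  by rewrite -sorted_pairwise ?sort_sorted //;
    [exact: brsk_order_total | exact: brsk_order_trans].
by apply/allP => x; rewrite mem_sort => /(allP neg_V).
Qed.

Lemma brsk_neg_shape V : negative V -> brsk_shape (brsk_neg V).
Proof. by case/(brsk_neg_inv 0). Qed.

Lemma brsk_neg_last_mle V : negative V ->
  mle (last [::] (brsk_neg V).1) (last [::] (brsk_neg V).2).
Proof.
move=> neg_V; have [size_PQ size_rows] := brsk_neg_shape neg_V.
rewrite -!nth_last -size_PQ; apply/mleP; split=> // k.
by have [_ + _ _] := brsk_neg_inv k neg_V; apply.
Qed.

Lemma brsk_neg_head_mle V A B : negative V ->
  (forall C, is_chain C -> {subset C <= V} -> mle (A ++ sndm C) (fstm C ++ B)) ->
  mle (A ++ head [::] (brsk_neg V).2) (head [::] (brsk_neg V).1 ++ B).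
Proof.
move=> neg_V chains_V; rewrite -!nth0.
have /mleP[size_AB _] : mle A B.
  by have := chains_V [::] erefl; rewrite cats0; apply.
apply/mleP; split=> [|k].
  by rewrite !size_cat size_AB (brsk_neg_shape neg_V).2 addnC.
have [_ _ [C stC le_C] _] := brsk_neg_inv k neg_V.
have [count_fst count_snd] := count_ge_straddling_chain stC.
case/and3P: stC => chain_C _ /allP in_V.
have sub_V : {subset C <= V} by move=> p /in_V; rewrite mem_sort.
have /mleP[_ /(_ k)] := chains_V C chain_C sub_V.
by rewrite !count_cat count_fst count_snd; lia.
Qed.

Lemma is_chain_rev_swap C : is_chain C -> is_chain (rev (map swap_pt C)).
Proof.
rewrite /is_chain rev_sorted sorted_map; apply: sub_sorted.
by move=> [u1 u2] [v1 v2]; rewrite /relpre /chain_rel /= andbC.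
Qed.

Lemma head_rev (T : Type) (x0 : T) s : head x0 (rev s) = last x0 s.
Proof. by case/lastP: s => // s x; rewrite rev_rcons last_rcons. Qed.

Theorem lemma7p2 (T W U : seq (nat * nat)) :
  uniq T -> pos_entries T -> negative T ->
  uniq W -> pos_entries W -> positive W ->
  pos_entries U -> U != [::] -> nonvanishing U ->
  bounded_ms T W U ->
  bounded_bt T W (brsk U).
Proof.
move=> _ _ neg_T _ _ pos_W _ _ _ bnd.
set V := neg_part U; set V' := iota_ms (pos_part U).
have neg_V : negative V by apply/allP => p; rewrite mem_filter => /andP[].
have neg_V' : negative V'.
  by apply/allP => x /mapP[p]; rewrite mem_filter => /andP[lt_p _] ->.
have le_T : mle (fstm T) (sndm T) by apply: mle_map => p /(allP neg_T) /ltnW.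
have le_W : mle (sndm W) (fstm W) by apply: mle_map => p /(allP pos_W) /ltnW.
have chains_V C : is_chain C -> {subset C <= V} ->
    mle (fstm T ++ sndm C) (fstm C ++ sndm T).
  move=> chain_C sub_V; apply: (bnd C chain_C _).1 => p /sub_V.
  by rewrite mem_filter => /andP[].
have chains_V' C : is_chain C -> {subset C <= V'} ->
    mle (sndm W ++ sndm C) (fstm C ++ fstm W).
  move=> chain_C sub_V'.
  have sub_U : {subset rev (map swap_pt C) <= U}.
    move=> x; rewrite mem_rev => /mapP[p /sub_V' /mapP[q]].
    by rewrite mem_filter => /andP[_ qU] -> ->; case: q qU.
  have := (bnd _ (is_chain_rev_swap chain_C) sub_U).2.
  rewrite /mle2 /mdiff_le /fstm /sndm !map_rev -!map_comp.
  by rewrite (@mle_perm _ (sndm W ++ sndm C) _ (fstm C ++ fstm W)) //;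
    apply/permP => f; rewrite !count_cat count_rev addnC.
rewrite /bounded_bt /brsk /brsk_pos /iota_bt /=.
have head_V := brsk_neg_head_mle neg_V chains_V.
have head_V' := brsk_neg_head_mle neg_V' chains_V'.
have last_V := brsk_neg_last_mle neg_V; have last_V' := brsk_neg_last_mle neg_V'.
have [size_PQ _] := brsk_neg_shape neg_V; have [size_PQ' _] := brsk_neg_shape neg_V'.
case: (brsk_neg V) size_PQ head_V last_V => P Q /= size_PQ head_V last_V.
case: (brsk_neg V') size_PQ' head_V' last_V' => P' Q' /= size_PQ' head_V' last_V'.
split.
- case: P Q size_PQ head_V last_V => [|x P] [|y Q] //= _ head_V _.
  by rewrite !head_rev; apply: mdiff_le_of_mle.
- case: Q' P' size_PQ' head_V' last_V' => [|y Q'] [|x P'] //= _ head_V' _.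
    by rewrite !cats0; apply: mdiff_le_of_mle.
  rewrite !last_cat !rev_cons !last_rcons /mdiff_le.
  by rewrite (mle_perm (permEl (perm_catC _ _)) (permEl (perm_catC _ _))).
Qed.
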